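(* Let $\mu$ be a singular cardinal with $\aleph_0<\kappa=\operatorname{cf}(\mu)<\mu$ and $\lambda=\mu^+$. Let $\langle S_i:i<\kappa\rangle$ be pairwise disjoint stationary subsets of $\{\delta<\lambda:\operatorname{cf}(\delta)=\kappa\}$, and for each $i<\kappa$ let $\bar C^i=\langle C^i_\delta:\delta\in S_i\rangle$ be an $S_i$-club system such that $\lambda\notin\mathrm{id}_p(\bar C^i,\bar J^i)$, where $\bar J^i=\langle J^{b[\mu]}_{C^i_\delta}:\delta\in S_i\rangle$, and $\operatorname{otp}(C^i_\delta)=\kappa$ for every $\delta\in S_i$. Then there is a $\lambda$-club system $\bar e=\langle e_\beta:\beta<\lambda\text{ limit}\rangle$ such that $|e_\beta|\leq\operatorname{cf}(\beta)+\operatorname{cf}(\mu)$ for each $\beta$, and for every $i<\kappa$, every limit $\beta<\lambda$ and every $\delta\in S_i\cap(e_\beta\cup\{\beta\})$, we have $C^i_\delta\subseteq e_\beta$.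
   Context: An $S$-club system is a sequence $\langle C_\delta:\delta\in S\rangle$ with each $C_\delta$ a closed unbounded subset of $\delta$; a $\lambda$-club system is such a sequence indexed by all limit ordinals $\beta<\lambda$. $\operatorname{nacc}(C)$ denotes the non-accumulation points of $C$. $J^{b[\mu]}_{C_\delta}$ is the ideal of $A\subseteq C_\delta$ for which there exist a cardinal $\theta<\mu$ and $\gamma<\delta$ such that every $\beta\in A\cap\operatorname{nacc}(C_\delta)$ has $\beta<\gamma$ or $\operatorname{cf}(\beta)<\theta$. $\mathrm{id}_p(\bar C,\bar J)$ is the ideal of those $A\subseteq\lambda$ for which there is a club $E\subseteq\lambda$ with $E\cap C_\delta\in J_\delta$ for all $\delta\in A\cap S$. *)

(* Ordinals below lambda = mu^+ are modelled as the elements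
   of a type T equipped with a well-order lt; all cardinals/ordinals of the
   statement are < lambda, hence elements of T. *)
From Stdlib Require Import Classical.

Section Ord.
Context {T : Type} (lt : T -> T -> Prop).

Definition le (x y : T) : Prop := x = y \/ lt x y.

Definition well_order : Prop :=
  (forall x, ~ lt x x) /\
  (forall x y z, lt x y -> lt y z -> lt x z) /\
  (forall x y, lt x y \/ x = y \/ lt y x) /\
  well_founded lt.

Definition seg (a : T) : T -> Prop := fun x => lt x a.

Definition card_le (P Q : T -> Prop) : Prop :=
  exists f : {x | P x} -> {y | Q y}, forall u v, f u = f v -> u = v.

Definition card_le_sum (P Q1 Q2 : T -> Prop) : Prop :=
  exists f : {x | P x} -> ({y | Q1 y} + {y | Q2 y})%type,
    forall u v, f u = f v -> u = v.

Definition is_cardinal (a : T) : Prop :=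
  forall b, lt b a -> ~ card_le (seg a) (seg b).

(* The whole of T has order type m^+ : m is a cardinal, every proper
   initial segment of T has size <= |m|, and T itself has size > |m|. *)
Definition is_successor_of (m : T) : Prop :=
  is_cardinal m /\ (forall x, card_le (seg x) (seg m)) /\
  ~ card_le (fun _ => True) (seg m).

Definition is_limit (b : T) : Prop :=
  (exists y, lt y b) /\ (forall y, lt y b -> exists z, lt y z /\ lt z b).

Definition is_omega (w : T) : Prop :=
  is_limit w /\ forall v, is_limit v -> ~ lt v w.

Definition cofinal_map (r b : T) : Prop :=
  exists f : T -> T, (forall x, lt x r -> lt (f x) b) /\
    (forall y, lt y b -> exists x, lt x r /\ le y (f x)).

Definition cof (b r : T) : Prop :=
  cofinal_map r b /\ forall r', lt r' r -> ~ cofinal_map r' b.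

Definition unbounded_below (E : T -> Prop) (b : T) : Prop :=
  forall x, lt x b -> exists y, E y /\ lt x y /\ lt y b.

Definition club_in (E : T -> Prop) (d : T) : Prop :=
  (forall x, E x -> lt x d) /\ unbounded_below E d /\
  (forall g, lt g d -> is_limit g -> unbounded_below E g -> E g).

Definition club (E : T -> Prop) : Prop :=
  (forall x, exists y, E y /\ lt x y) /\
  (forall g, is_limit g -> unbounded_below E g -> E g).

Definition stationary (S : T -> Prop) : Prop :=
  forall E, club E -> exists x, S x /\ E x.

Definition acc_point (C : T -> Prop) (b : T) : Prop :=
  (exists g, lt g b) /\ unbounded_below C b.

Definition nacc (C : T -> Prop) (b : T) : Prop := C b /\ ~ acc_point C b.

Definition J_b (mu : T) (C : T -> Prop) (delta : T) (A : T -> Prop) : Prop :=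
  (forall x, A x -> C x) /\
  exists theta, is_cardinal theta /\ lt theta mu /\
  exists g, lt g delta /\
    forall b, A b -> nacc C b -> lt b g \/ exists r, cof b r /\ lt r theta.

Definition in_id_p (S : T -> Prop) (C : T -> T -> Prop)
    (J : T -> (T -> Prop) -> Prop) (A : T -> Prop) : Prop :=
  exists E, club E /\
    forall d, A d -> S d -> J d (fun x => E x /\ C d x).

Definition otp_eq (C : T -> Prop) (k : T) : Prop :=
  exists f : T -> T,
    (forall x y, lt x k -> lt y k -> lt x y -> lt (f x) (f y)) /\
    (forall x, lt x k -> C (f x)) /\
    (forall y, C y -> exists x, lt x k /\ f x = y).

End Ord.

From Stdlib Require Import Classical ClassicalEpsilon FunctionalExtensionality ProofIrrelevance Cantor.

(* For a limit [b] of cofinality [r], start from the range of a cofinal map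
   [r -> b] together with the ladder at [b] (if [b] lies in some [S i]), and
   close [w] times under adding the ladder [C i d] of every [d] already present
   and under limit points below [b]; [e b] is the closure of the union.  Each
   step keeps the size at most [max r kappa], because [nu * nu] and [w * nu]
   have size [nu] for infinite [nu] (Hessenberg, via Goedel's well-order of
   pairs).  A limit point [d] in [S i] of the union has cofinality
   [kappa > w], so some single stage is already unbounded in [d]; thus [d]
   itself enters the next stage and [C i d] the one after. *)

Definition injects {X Y : Type} (P : X -> Prop) (Q : Y -> Prop) : Prop :=
  exists f : X -> Y, (forall x, P x -> Q (f x)) /\
    (forall x y, P x -> P y -> f x = f y -> x = y).

Lemma injects_trans {X Y Z : Type} (P : X -> Prop) (Q : Y -> Prop) (R : Z -> Prop) :
  injects P Q -> injects Q R -> injects P R.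
Proof.
  intros [f [f_into f_inj]] [g [g_into g_inj]].
  exists (fun x => g (f x)). split; auto.
Qed.

Lemma injects_sub {X Y : Type} (P P' : X -> Prop) (Q Q' : Y -> Prop) :
  (forall x, P x -> P' x) -> (forall y, Q y -> Q' y) -> injects P' Q -> injects P Q'.
Proof. intros HP HQ [f [f_into f_inj]]. exists f. split; auto. Qed.

Lemma injects_incl {X : Type} (P Q : X -> Prop) : (forall x, P x -> Q x) -> injects P Q.
Proof. intros HPQ. exists (fun x => x). split; auto. Qed.

Section Ordinals.

Variables (T : Type) (lt : T -> T -> Prop) (w : T).
Hypotheses (Hwo : well_order lt) (Hw : is_omega lt w).

Local Notation le := (le lt).
Local Notation seg := (seg lt).

Lemma lt_irrefl x : ~ lt x x. Proof. apply Hwo. Qed.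
Lemma lt_trans x y z : lt x y -> lt y z -> lt x z. Proof. apply Hwo. Qed.
Lemma lt_trichotomy x y : lt x y \/ x = y \/ lt y x. Proof. apply Hwo. Qed.
Lemma lt_wf : well_founded lt. Proof. apply Hwo. Qed.

Lemma le_lt_trans x y z : le x y -> lt y z -> lt x z.
Proof. intros [->|Hxy] Hyz; [exact Hyz | exact (lt_trans _ _ _ Hxy Hyz)]. Qed.

Lemma lt_le_trans x y z : lt x y -> le y z -> lt x z.
Proof. intros Hxy [<-|Hyz]; [exact Hxy | exact (lt_trans _ _ _ Hxy Hyz)]. Qed.

Lemma le_trans x y z : le x y -> le y z -> le x z.
Proof. intros [->|Hxy] Hyz; [exact Hyz | right; exact (lt_le_trans _ _ _ Hxy Hyz)]. Qed.

Lemma not_lt_le x y : ~ lt x y -> le y x.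
Proof. intros H. destruct (lt_trichotomy x y) as [h|[->|h]]; [tauto | left | right]; auto. Qed.

Lemma lt_not_le x y : lt x y -> ~ le y x.
Proof. intros Hxy Hyx. exact (lt_irrefl _ (lt_le_trans _ _ _ Hxy Hyx)). Qed.

Lemma max_exists x y : exists m, (m = x \/ m = y) /\ le x m /\ le y m.
Proof.
  destruct (classic (lt x y)) as [h|h].
  - exists y. split; [right | split; [right | left]]; auto.
  - exists x. split; [left | split; [left | apply not_lt_le]]; auto.
Qed.

Lemma least_exists (P : T -> Prop) :
  (exists x, P x) -> exists m, P m /\ forall y, P y -> le m y.
Proof.
  intros [x Px]. apply NNPP; intros Hno.
  enough (Hnot : forall y, ~ P y) by exact (Hnot x Px).
  intros y. induction y as [y IH] using (well_founded_ind lt_wf). intros Py.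
  apply Hno. exists y. split; [exact Py |].
  intros z Pz. apply not_lt_le. intros Hzy. exact (IH z Hzy Pz).
Qed.

Definition least (P : T -> Prop) : T :=
  epsilon (inhabits w) (fun m => P m /\ forall y, P y -> le m y).

Lemma least_spec (P : T -> Prop) :
  (exists x, P x) -> P (least P) /\ forall y, P y -> le (least P) y.
Proof. intros HP. unfold least. apply epsilon_spec, least_exists, HP. Qed.

Lemma injects_image {X : Type} (P : T -> Prop) (Q : X -> Prop) (g : T -> X) :
  (forall y, Q y -> exists x, P x /\ g x = y) -> injects Q P.
Proof.
  intros Hsurj.
  exists (fun y => epsilon (inhabits w) (fun x => P x /\ g x = y)). split.
  - intros y Qy. apply (epsilon_spec (inhabits w) _ (Hsurj y Qy)).
  - intros y y' Qy Qy' E.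
    destruct (epsilon_spec (inhabits w) _ (Hsurj y Qy)) as [_ <-].
    destruct (epsilon_spec (inhabits w) _ (Hsurj y' Qy')) as [_ <-].
    rewrite E. reflexivity.
Qed.

Fixpoint nat_ord (n : nat) : T :=
  match n with
  | O => least (fun _ => True)
  | Datatypes.S n => least (lt (nat_ord n))
  end.

Lemma nat_ord_spec n : lt (nat_ord n) w /\ lt (nat_ord n) (nat_ord (Datatypes.S n)).
Proof.
  destruct (proj1 Hw) as [[y0 Hy0] Hlim].
  induction n as [|n [IHw _]]; simpl.
  - assert (H0 : lt (least (fun _ => True)) w).
    { apply le_lt_trans with y0; [apply least_spec; eauto | exact Hy0]. }
    split; [exact H0 |].
    destruct (Hlim _ H0) as [z [Hz _]]. apply least_spec; eauto.
  - destruct (Hlim _ IHw) as [z [Hz Hzw]].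
    assert (Hs : lt (least (lt (nat_ord n))) w).
    { apply le_lt_trans with z; [apply least_spec; eauto | exact Hzw]. }
    split; [exact Hs |].
    destruct (Hlim _ Hs) as [z' [Hz' _]]. apply least_spec; eauto.
Qed.

Lemma nat_ord_mono n m : (n < m)%nat -> lt (nat_ord n) (nat_ord m).
Proof.
  induction 1 as [|m _ IH]; [apply nat_ord_spec |].
  exact (lt_trans _ _ _ IH (proj2 (nat_ord_spec m))).
Qed.

Lemma nat_ord_inj n m : nat_ord n = nat_ord m -> n = m.
Proof.
  intros E. destruct (PeanoNat.Nat.lt_total n m) as [h|[h|h]]; [| exact h |];
    apply nat_ord_mono in h; rewrite E in h; destruct (lt_irrefl _ h).
Qed.

Lemma nat_ord_surj x : lt x w -> exists n, nat_ord n = x.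
Proof.
  induction x as [x IH] using (well_founded_ind lt_wf). intros Hxw.
  assert (Hnot_limit : ~ is_limit lt x) by (intros L; exact (proj2 Hw x L Hxw)).
  destruct (classic (exists y, lt y x)) as [Hne|Hmin].
  - assert (Hpred : exists y, lt y x /\ forall z, lt y z -> ~ lt z x).
    { apply NNPP; intros Hno. apply Hnot_limit. split; [exact Hne |].
      intros y Hy. apply NNPP; intros Hnz. apply Hno. exists y. split; [exact Hy |].
      intros z Hyz Hzx. apply Hnz. exists z. auto. }
    destruct Hpred as [y [Hyx Hgap]].
    destruct (IH y Hyx (lt_trans _ _ _ Hyx Hxw)) as [n Hn].
    exists (Datatypes.S n). simpl. rewrite Hn.
    destruct (least_spec (lt y)) as [Hs Hsmin]; [eauto |].
    destruct (Hsmin x Hyx) as [E|Hlt]; [exact E |].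
    destruct (Hgap _ Hs Hlt).
  - exists O. simpl.
    destruct (least_spec (fun _ => True)) as [_ Hsmin]; [eauto |].
    destruct (Hsmin x I) as [E|Hlt]; [exact E |].
    destruct (Hmin (ex_intro _ _ Hlt)).
Qed.

Definition ord_nat (t : T) : nat := epsilon (inhabits O) (fun n => nat_ord n = t).

Lemma nat_ord_ord_nat t : lt t w -> nat_ord (ord_nat t) = t.
Proof. intros Ht. unfold ord_nat. apply epsilon_spec, nat_ord_surj, Ht. Qed.

Lemma ord_nat_nat_ord n : ord_nat (nat_ord n) = n.
Proof. apply nat_ord_inj, nat_ord_ord_nat, nat_ord_spec. Qed.

Definition square (a : T) (p : T * T) : Prop := lt (fst p) a /\ lt (snd p) a.

Lemma square_w_injects : injects (square w) (seg w).
Proof.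
  exists (fun p => nat_ord (to_nat (ord_nat (fst p), ord_nat (snd p)))). split.
  - intros p _. apply nat_ord_spec.
  - intros [x1 x2] [y1 y2] [Hx1 Hx2] [Hy1 Hy2] E; cbn [fst snd] in *.
    apply nat_ord_inj, (f_equal of_nat) in E. rewrite !cancel_of_to in E.
    injection E as E1 E2.
    rewrite <- (nat_ord_ord_nat x1), <- (nat_ord_ord_nat x2), E1, E2 by assumption.
    rewrite !nat_ord_ord_nat by assumption. reflexivity.
Qed.

Lemma square_injects_square a g : injects (seg a) (seg g) -> injects (square a) (square g).
Proof.
  intros [h [h_into h_inj]].
  exists (fun p => (h (fst p), h (snd p))). split.
  - intros p [H1 H2]. split; apply h_into; assumption.
  - intros [x1 x2] [y1 y2] [Hx1 Hx2] [Hy1 Hy2] E; simpl in *.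
    injection E as E1 E2. f_equal; apply h_inj; assumption.
Qed.

(* For infinite [y], [y + 1] fits into [y]: send [y] to [0] and shift the
   finite ordinals up by one. *)
Lemma succ_injects y : le w y -> injects (fun x => le x y) (seg y).
Proof.
  intros Hwy.
  assert (Hfin : forall n, lt (nat_ord n) y).
  { intros n. apply lt_le_trans with w; [apply nat_ord_spec | exact Hwy]. }
  exists (fun x => if excluded_middle_informative (x = y) then nat_ord O
           else if excluded_middle_informative (lt x w)
                then nat_ord (Datatypes.S (ord_nat x)) else x).
  split.
  - intros x Hxy.
    destruct excluded_middle_informative as [_|Hne]; [apply Hfin |].
    destruct excluded_middle_informative as [_|_]; [apply Hfin |].
    destruct Hxy as [E|Hlt]; [contradiction | exact Hlt].
  - intros x x' _ _.
    assert (Hinf : forall n z, ~ lt z w -> nat_ord n <> z).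
    { intros n z Hz <-. exact (Hz (proj1 (nat_ord_spec n))). }
    repeat destruct excluded_middle_informative; intros E; subst; try reflexivity;
      try (apply nat_ord_inj in E; discriminate E);
      try (exfalso; eapply Hinf; eauto; fail).
    apply nat_ord_inj in E. injection E as E.
    rewrite <- (nat_ord_ord_nat x), E by assumption. apply nat_ord_ord_nat; assumption.
Qed.

Section Rank.

Variables (X : Type) (R : X -> X -> Prop) (P : X -> Prop) (a : T).
Hypotheses (R_wf : well_founded R) (R_trans : forall p q s, R p q -> R q s -> R p s)
  (R_total : forall p q, p <> q -> R p q \/ R q p)
  (P_down : forall p q, R q p -> P p -> P q)
  (P_small : forall p, P p -> ~ injects (seg a) (fun q => R q p)).

Definition rank : X -> T :=
  Fix R_wf (fun _ => T) (fun p rec => least (fun t => forall q (H : R q p), lt (rec q H) t)).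

Lemma rank_eq p : rank p = least (fun t => forall q, R q p -> lt (rank q) t).
Proof.
  unfold rank at 1. rewrite Fix_eq; [reflexivity |].
  intros x f g Hfg.
  replace g with f; [reflexivity |].
  apply functional_extensionality_dep; intros y.
  apply functional_extensionality_dep; intros H. apply Hfg.
Qed.

(* [rank p < a]: otherwise [{q | R q p}], which the rank maps onto the
   ordinals below [rank p], would contain a copy of [a]. *)
Lemma rank_spec p : P p ->
  (forall q, R q p -> lt (rank q) (rank p)) /\ lt (rank p) a /\
  (forall t, lt t (rank p) -> exists q, R q p /\ rank q = t).
Proof.
  induction p as [p IH] using (well_founded_ind R_wf). intros Pp.
  assert (IHp : forall q, R q p -> lt (rank q) a) by (intros q Hq; apply (IH q Hq (P_down _ _ Hq Pp))).
  destruct (least_spec (fun t => forall q, R q p -> lt (rank q) t)) as [Hub Hleast];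
    [exists a; exact IHp |].
  rewrite <- rank_eq in Hub, Hleast.
  assert (Honto : forall t, lt t (rank p) -> exists q, R q p /\ rank q = t).
  { intros t Ht. apply NNPP; intros Hno.
    apply (lt_not_le _ _ Ht), Hleast. intros q Hq.
    apply NNPP; intros Hqt. apply not_lt_le in Hqt as [E|Hlt]; [apply Hno; eauto |].
    destruct (IH q Hq (P_down _ _ Hq Pp)) as [_ [_ Hq_onto]].
    destruct (Hq_onto t Hlt) as [q' [Hq' E]].
    apply Hno. exists q'. split; [exact (R_trans _ _ _ Hq' Hq) | exact E]. }
  split; [exact Hub | split; [| exact Honto]].
  apply NNPP; intros Hge. apply not_lt_le in Hge.
  apply (P_small p Pp).
  exists (fun t => epsilon (inhabits p) (fun q => R q p /\ rank q = t)). split.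
  - intros t Ht. apply (epsilon_spec (inhabits p) _ (Honto t (lt_le_trans _ _ _ Ht Hge))).
  - intros t t' Ht Ht' E.
    destruct (epsilon_spec (inhabits p) _ (Honto t (lt_le_trans _ _ _ Ht Hge))) as [_ <-].
    destruct (epsilon_spec (inhabits p) _ (Honto t' (lt_le_trans _ _ _ Ht' Hge))) as [_ <-].
    rewrite E. reflexivity.
Qed.

Lemma rank_injects : injects P (seg a).
Proof.
  exists rank. split; [intros p Pp; apply rank_spec, Pp |].
  intros p q Pp Pq E. apply NNPP; intros Hne.
  destruct (R_total p q Hne) as [H|H];
    [pose proof (proj1 (rank_spec q Pq) p H) as Hlt | pose proof (proj1 (rank_spec p Pp) q H) as Hlt];
    rewrite E in Hlt; exact (lt_irrefl _ Hlt).
Qed.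

End Rank.

Definition pmax (p : T * T) : T :=
  if excluded_middle_informative (lt (fst p) (snd p)) then snd p else fst p.

Lemma square_pmax a p : square a p <-> lt (pmax p) a.
Proof.
  unfold pmax, square. destruct excluded_middle_informative as [h|h].
  - split; [tauto |]. intros H. split; [exact (lt_trans _ _ _ h H) | exact H].
  - split; [tauto |]. intros H. split; [exact H | exact (le_lt_trans _ _ _ (not_lt_le _ _ h) H)].
Qed.

Definition goedel_lt (p q : T * T) : Prop :=
  lt (pmax p) (pmax q) \/
  (pmax p = pmax q /\ (lt (fst p) (fst q) \/ (fst p = fst q /\ lt (snd p) (snd q)))).

Lemma goedel_lt_pmax p q : goedel_lt p q -> le (pmax p) (pmax q).
Proof. intros [h|[h _]]; [right | left]; exact h. Qed.

Lemma goedel_wf : well_founded goedel_lt.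
Proof.
  enough (H : forall m x y, pmax (x, y) = m -> Acc goedel_lt (x, y)) by (intros [x y]; eauto).
  intros m. induction m as [m IHm] using (well_founded_ind lt_wf).
  intros x. induction x as [x IHx] using (well_founded_ind lt_wf).
  intros y. induction y as [y IHy] using (well_founded_ind lt_wf).
  intros Hm. constructor. intros [x' y'] [H|[H [H1|[H1 H2]]]]; cbn [fst snd] in *.
  - rewrite Hm in H. eapply IHm; eauto.
  - eapply IHx; eauto. congruence.
  - subst x'. apply IHy; [exact H2 | congruence].
Qed.

Lemma goedel_trans p q s : goedel_lt p q -> goedel_lt q s -> goedel_lt p s.
Proof.
  intros [H|[H H']] [G|[G G']].
  - left; eapply lt_trans; eauto.
  - left. rewrite <- G; exact H.
  - left. rewrite H; exact G.
  - right. split; [congruence |].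
    destruct H' as [h|[h h']]; destruct G' as [g|[g g']].
    + left; eapply lt_trans; eauto.
    + left; rewrite <- g; exact h.
    + left; rewrite h; exact g.
    + right; split; [congruence | eapply lt_trans; eauto].
Qed.

Lemma goedel_total p q : p <> q -> goedel_lt p q \/ goedel_lt q p.
Proof.
  intros Hne. unfold goedel_lt.
  destruct (lt_trichotomy (pmax p) (pmax q)) as [h|[h|h]]; [tauto | | tauto].
  pose proof (eq_sym h) as h'.
  destruct (lt_trichotomy (fst p) (fst q)) as [h1|[h1|h1]]; [tauto | | tauto].
  pose proof (eq_sym h1) as h1'.
  destruct (lt_trichotomy (snd p) (snd q)) as [h2|[h2|h2]]; [tauto | | tauto].
  destruct p, q; cbn [fst snd] in *; subst. congruence.
Qed.

Lemma cardinal_limit a : lt w a ->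
  ~ (exists g, le w g /\ lt g a /\ injects (seg a) (seg g)) ->
  forall y, lt y a -> exists z, lt y z /\ lt z a.
Proof.
  intros Hwa Hcard y Hya. apply NNPP; intros Hgap.
  destruct (classic (lt y w)) as [Hyw|Hyw]; [apply Hgap; eauto |].
  apply Hcard. exists y. split; [exact (not_lt_le _ _ Hyw) | split; [exact Hya |]].
  apply (injects_sub (seg a) (fun x => le x y) (seg y) (seg y)); [| tauto | apply succ_injects, not_lt_le, Hyw].
  intros x Hxa. apply not_lt_le. intros Hyx. apply Hgap. eauto.
Qed.

Theorem square_injects a : le w a -> injects (square a) (seg a).
Proof.
  induction a as [a IH] using (well_founded_ind lt_wf). intros [<-|Hwa]; [exact square_w_injects |].
  destruct (classic (exists g, le w g /\ lt g a /\ injects (seg a) (seg g)))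
    as [[g [Hwg [Hga Hag]]]|Hcard].
  - eapply injects_trans; [exact (square_injects_square _ _ Hag) |].
    refine (injects_sub _ _ _ _ (fun _ H => H) _ (IH g Hga Hwg)).
    intros x Hx. exact (lt_trans _ _ _ Hx Hga).
  - (* [a] is a limit, so each proper initial segment of Goedel's order on
       [a * a] lies in some [gam * gam] with [w <= gam < a], which is smaller than [a]. *)
    apply (rank_injects _ goedel_lt (square a) a goedel_wf goedel_trans goedel_total).
    + intros p q Hqp Hp. apply square_pmax. apply square_pmax in Hp.
      exact (le_lt_trans _ _ _ (goedel_lt_pmax _ _ Hqp) Hp).
    + intros p Hp Hinj. apply square_pmax in Hp.
      destruct (cardinal_limit a Hwa Hcard _ Hp) as [z [Hpz Hza]].
      destruct (max_exists w z) as [gam [Hgam [Hwgam Hzgam]]].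
      assert (Hgama : lt gam a) by (destruct Hgam as [-> | ->]; assumption).
      apply Hcard. exists gam. split; [exact Hwgam | split; [exact Hgama |]].
      apply (injects_trans _ _ _ Hinj), (injects_trans _ (square gam)); [| exact (IH gam Hgama Hwgam)].
      apply injects_incl. intros q Hqp. apply square_pmax.
      apply le_lt_trans with (pmax p); [exact (goedel_lt_pmax _ _ Hqp) |].
      exact (lt_le_trans _ _ _ Hpz Hzgam).
Qed.

Lemma injects_indexed_union nu (D : T -> Prop) (A : T -> T -> Prop) : le w nu ->
  injects D (seg nu) -> (forall d, D d -> injects (A d) (seg nu)) ->
  injects (fun y => exists d, D d /\ A d y) (seg nu).
Proof.
  intros Hnu [g [g_into g_inj]] HA.
  destruct (square_injects nu Hnu) as [pair [pair_into pair_inj]].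
  destruct (choice (fun d h => D d -> (forall y, A d y -> seg nu (h y)) /\
                      (forall y y', A d y -> A d y' -> h y = h y' -> y = y'))) as [G HG].
  { intros d. destruct (classic (D d)) as [Dd|nDd].
    - destruct (HA d Dd) as [h Hh]. exists h. auto.
    - exists (fun y => y). tauto. }
  destruct (choice (fun y d => (exists d, D d /\ A d y) -> D d /\ A d y)) as [idx Hidx].
  { intros y. destruct (classic (exists d, D d /\ A d y)) as [[d Hd]|Hno].
    - exists d. auto.
    - exists y. tauto. }
  assert (Hcode : forall y, (exists d, D d /\ A d y) -> square nu (g (idx y), G (idx y) y)).
  { intros y Hy. destruct (Hidx y Hy) as [Di Ai]. split; [apply g_into | apply HG]; assumption. }
  exists (fun y => pair (g (idx y), G (idx y) y)). split.
  - intros y Hy. apply pair_into, Hcode, Hy.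
  - intros y y' Hy Hy' E.
    apply pair_inj in E; [| apply Hcode; assumption ..]. injection E as E1 E2.
    destruct (Hidx y Hy) as [Di Ai]. destruct (Hidx y' Hy') as [Di' Ai'].
    apply g_inj in E1; [| assumption ..]. rewrite <- E1 in E2, Ai'.
    exact (proj2 (HG _ Di) y y' Ai Ai' E2).
Qed.

Lemma injects_countable_union nu (A : nat -> T -> Prop) : le w nu ->
  (forall n, injects (A n) (seg nu)) -> injects (fun y => exists n, A n y) (seg nu).
Proof.
  intros Hnu HA.
  apply (injects_sub _ (fun y => exists t, seg w t /\ A (ord_nat t) y) (seg nu) (seg nu));
    [| tauto |].
  - intros y [n Hn]. exists (nat_ord n). rewrite ord_nat_nat_ord. split; [apply nat_ord_spec | exact Hn].
  - apply injects_indexed_union; [exact Hnu | | intros t _; apply HA].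
    apply injects_incl. intros t Ht. exact (lt_le_trans _ _ _ Ht Hnu).
Qed.

Lemma injects_union nu (A B : T -> Prop) : le w nu ->
  injects A (seg nu) -> injects B (seg nu) -> injects (fun y => A y \/ B y) (seg nu).
Proof.
  intros Hnu HA HB.
  apply (injects_sub _ (fun y => exists n, match n with O => A y | _ => B y end) (seg nu) (seg nu));
    [| tauto |].
  - intros y [Ay|By]; [exists O | exists (Datatypes.S O)]; assumption.
  - apply injects_countable_union; [exact Hnu |]. intros [|n]; assumption.
Qed.

Lemma limit_points_injects b (X : T -> Prop) :
  unbounded_below lt X b -> injects (fun y => lt y b /\ unbounded_below lt X y) X.
Proof.
  intros Hunb.
  assert (Hnext : forall y, lt y b -> X (least (fun x => X x /\ lt y x)) /\
            lt y (least (fun x => X x /\ lt y x)) /\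
            forall x, X x -> lt y x -> le (least (fun x => X x /\ lt y x)) x).
  { intros y Hy. destruct (least_spec (fun x => X x /\ lt y x)) as [[H1 H2] H3].
    - destruct (Hunb y Hy) as [x [Hx [Hyx _]]]. eauto.
    - split; [exact H1 | split; [exact H2 |]]. intros x Hx Hyx. apply H3. auto. }
  assert (Hmono : forall y y', lt y b -> lt y' b -> unbounded_below lt X y' -> lt y y' ->
            lt (least (fun x => X x /\ lt y x)) (least (fun x => X x /\ lt y' x))).
  { intros y y' Hy Hy' Hunb' Hyy'.
    destruct (Hunb' y Hyy') as [x [Hx [Hyx Hxy']]].
    apply le_lt_trans with x; [apply (Hnext y Hy); assumption |].
    exact (lt_trans _ _ _ Hxy' (proj1 (proj2 (Hnext y' Hy')))). }
  exists (fun y => least (fun x => X x /\ lt y x)). split.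
  - intros y [Hy _]. apply Hnext, Hy.
  - intros y y' [Hy Hunby] [Hy' Hunby'] E.
    destruct (lt_trichotomy y y') as [Hlt|[Heq|Hlt]]; [| exact Heq |];
      [pose proof (Hmono _ _ Hy Hy' Hunby' Hlt) as H | pose proof (Hmono _ _ Hy' Hy Hunby Hlt) as H];
      rewrite E in H; destruct (lt_irrefl _ H).
Qed.

Definition lim_closure (b : T) (X : T -> Prop) (y : T) : Prop :=
  X y \/ (lt y b /\ is_limit lt y /\ unbounded_below lt X y).

Lemma lim_closure_injects b nu (X : T -> Prop) : le w nu -> unbounded_below lt X b ->
  injects X (seg nu) -> injects (lim_closure b X) (seg nu).
Proof.
  intros Hnu Hunb HX. apply injects_union; [exact Hnu | exact HX |].
  apply (injects_sub _ (fun y => lt y b /\ unbounded_below lt X y) (seg nu) (seg nu));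
    [tauto | tauto |].
  exact (injects_trans _ _ _ (limit_points_injects b X Hunb) HX).
Qed.

Lemma lim_closure_club b (X : T -> Prop) : (forall y, X y -> lt y b) ->
  unbounded_below lt X b -> club_in lt (lim_closure b X) b.
Proof.
  intros Hbelow Hunb. split; [| split].
  - intros y [Hy|[Hy _]]; [exact (Hbelow y Hy) | exact Hy].
  - intros x Hx. destruct (Hunb x Hx) as [y [Hy Hxy]]. exists y. split; [left |]; assumption.
  - intros g Hgb Hg Hunb_g. right. split; [exact Hgb | split; [exact Hg |]].
    intros x Hxg. destruct (Hunb_g x Hxg) as [y [[Hy|[_ [_ Hunb_y]]] [Hxy Hyg]]].
    + exists y. auto.
    + destruct (Hunb_y x Hxy) as [z [Hz [Hxz Hzy]]].
      exists z. split; [exact Hz | split; [exact Hxz | exact (lt_trans _ _ _ Hzy Hyg)]].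
Qed.

(* Otherwise one bound per piece gives a cofinal map from [w] into [d]. *)
Lemma unbounded_countable_union (A : nat -> T -> Prop) d k : cof lt d k -> lt w k ->
  unbounded_below lt (fun y => exists n, A n y) d -> exists n, unbounded_below lt (A n) d.
Proof.
  intros [_ Hmin] Hwk Hunb. apply NNPP; intros Hno.
  destruct (choice (fun n x => lt x d /\ forall y, A n y -> lt x y -> ~ lt y d)) as [bound Hbound].
  { intros n. apply NNPP; intros Hnb. apply Hno. exists n. intros x Hx.
    apply NNPP; intros Hny. apply Hnb. exists x. split; [exact Hx |].
    intros y Hy Hxy Hyd. apply Hny. eauto. }
  apply (Hmin w Hwk). exists (fun t => bound (ord_nat t)). split.
  - intros t _. apply Hbound.
  - intros y Hy. destruct (Hunb y Hy) as [y' [[n Hn] [Hyy' Hy'd]]].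
    exists (nat_ord n). rewrite ord_nat_nat_ord. split; [apply nat_ord_spec | right].
    apply lt_le_trans with y'; [exact Hyy' |].
    apply not_lt_le. intros Hby'. exact (proj2 (Hbound n) y' Hn Hby' Hy'd).
Qed.

Lemma cof_exists b : exists r, cof lt b r.
Proof.
  destruct (least_exists (fun r => cofinal_map lt r b)) as [r [Hr Hmin]].
  - exists b, (fun x => x). split; [auto |]. intros y Hy. exists y. split; [exact Hy | left; reflexivity].
  - exists r. split; [exact Hr |]. intros r' Hr' Hcof'. exact (lt_not_le _ _ Hr' (Hmin r' Hcof')).
Qed.

Lemma card_le_sum_of_injects (P : T -> Prop) r k nu : (nu = r \/ nu = k) ->
  injects P (seg nu) -> card_le_sum P (seg r) (seg k).
Proof.
  intros Hnu [g [g_into g_inj]].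
  assert (Hinj : forall u v : {x | P x}, g (proj1_sig u) = g (proj1_sig v) -> u = v).
  { intros [u Pu] [v Pv] E. cbn in E. apply g_inj in E; [| assumption ..]. subst v.
    f_equal. apply proof_irrelevance. }
  destruct Hnu as [-> | ->].
  - exists (fun u => inl (exist _ (g (proj1_sig u)) (g_into _ (proj2_sig u)))).
    intros u v E. injection E as E. exact (Hinj u v E).
  - exists (fun u => inr (exist _ (g (proj1_sig u)) (g_into _ (proj2_sig u)))).
    intros u v E. injection E as E. exact (Hinj u v E).
Qed.

Section LadderClosure.

Variables (kappa : T) (S : T -> T -> Prop) (C : T -> T -> T -> Prop).
Hypotheses (Hwk : lt w kappa)
  (Hdisj : forall i j d, lt i kappa -> lt j kappa -> i <> j -> S i d -> S j d -> False)
  (Hcof : forall i d, lt i kappa -> S i d -> cof lt d kappa)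
  (Hclub : forall i d, lt i kappa -> S i d -> club_in lt (C i d) d)
  (Hotp : forall i d, lt i kappa -> S i d -> otp_eq lt (C i d) kappa).

(* By disjointness of the [S i], this is the single ladder [C i d] with [d] in [S i]. *)
Definition ladder (d y : T) : Prop := exists i, lt i kappa /\ S i d /\ C i d y.

Lemma ladder_below d y : ladder d y -> lt y d.
Proof. intros [i [Hi [Hd Hy]]]. exact (proj1 (Hclub i d Hi Hd) y Hy). Qed.

Lemma ladder_injects nu d : le kappa nu -> injects (ladder d) (seg nu).
Proof.
  intros Hknu. destruct (classic (exists i, lt i kappa /\ S i d)) as [[i [Hi Hd]]|Hno].
  - apply (injects_sub _ (C i d) (seg kappa) _).
    + intros y [j [Hj [Hjd Hy]]].
      destruct (classic (i = j)) as [<-|Hne]; [exact Hy | destruct (Hdisj i j d Hi Hj Hne Hd Hjd)].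
    + intros x Hx. exact (lt_le_trans _ _ _ Hx Hknu).
    + destruct (Hotp i d Hi Hd) as [h [_ [_ Honto]]]. exact (injects_image _ _ h Honto).
  - exists (fun y => y). split; intros y; [intros [i [Hi [Hd _]]] | intros ? [i [Hi [Hd _]]]];
      destruct (Hno (ex_intro _ i (conj Hi Hd))).
Qed.

Definition grow (b : T) (X : T -> Prop) (y : T) : Prop :=
  lim_closure b X y \/ exists d, X d /\ ladder d y.

Section AtLimit.

Variables (b r : T) (f : T -> T).
Hypotheses (Hb : is_limit lt b) (Hf_below : forall x, lt x r -> lt (f x) b)
  (Hf_cofinal : forall y, lt y b -> exists x, lt x r /\ le y (f x)).

Definition base (y : T) : Prop := (exists x, lt x r /\ f x = y) \/ ladder b y.

Fixpoint stage (n : nat) : T -> Prop :=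
  match n with
  | O => base
  | Datatypes.S n => grow b (stage n)
  end.

Definition stages (y : T) : Prop := exists n, stage n y.

Definition ladder_closure : T -> Prop := lim_closure b stages.

Lemma stage_below n y : stage n y -> lt y b.
Proof.
  revert y. induction n as [|n IH]; intros y; simpl.
  - intros [[x [Hx <-]]|Hy]; [exact (Hf_below x Hx) | exact (ladder_below _ _ Hy)].
  - intros [[Hy|[Hy _]]|[d [Hd Hy]]]; [exact (IH y Hy) | exact Hy |].
    exact (lt_trans _ _ _ (ladder_below _ _ Hy) (IH d Hd)).
Qed.

Lemma base_stage n y : base y -> stage n y.
Proof. induction n as [|n IH]; simpl; [auto | intros Hy; left; left; auto]. Qed.

Lemma stage_unbounded n : unbounded_below lt (stage n) b.
Proof.
  intros x Hx. destruct (proj2 Hb x Hx) as [z [Hxz Hzb]].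
  destruct (Hf_cofinal z Hzb) as [u [Hu Hzu]].
  exists (f u). split; [apply base_stage; left; eauto |].
  split; [exact (lt_le_trans _ _ _ Hxz Hzu) | exact (Hf_below u Hu)].
Qed.

Lemma stage_injects nu n : le w nu -> le kappa nu -> le r nu -> injects (stage n) (seg nu).
Proof.
  intros Hwnu Hknu Hrnu. induction n as [|n IH]; simpl.
  - apply injects_union; [exact Hwnu | | exact (ladder_injects nu b Hknu)].
    apply (injects_sub _ _ (seg r) _ (fun y H => H)); [intros x Hx; exact (lt_le_trans _ _ _ Hx Hrnu) |].
    exact (injects_image _ _ f (fun y H => H)).
  - apply injects_union; [exact Hwnu | exact (lim_closure_injects _ _ _ Hwnu (stage_unbounded n) IH) |].
    apply injects_indexed_union; [exact Hwnu | exact IH |]. intros d _. exact (ladder_injects nu d Hknu).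
Qed.

Lemma ladder_closure_club : club_in lt ladder_closure b.
Proof.
  apply lim_closure_club.
  - intros y [n Hy]. exact (stage_below n y Hy).
  - intros x Hx. destruct (stage_unbounded O x Hx) as [y [Hy Hxy]]. exists y. split; [exists O |]; assumption.
Qed.

Lemma ladder_closure_injects nu : le w nu -> le kappa nu -> le r nu ->
  injects ladder_closure (seg nu).
Proof.
  intros Hwnu Hknu Hrnu. apply lim_closure_injects; [exact Hwnu | |].
  - intros x Hx. destruct (stage_unbounded O x Hx) as [y [Hy Hxy]]. exists y. split; [exists O |]; assumption.
  - apply injects_countable_union; [exact Hwnu |]. intros n. exact (stage_injects nu n Hwnu Hknu Hrnu).
Qed.

(* A limit point [d] of the stages lies in [S i], so has cofinality [kappa > w];
   hence a single stage is unbounded in [d], and [d] enters the next stage. *)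
Lemma ladder_closure_closed i d x : lt i kappa -> S i d ->
  (ladder_closure d \/ d = b) -> C i d x -> ladder_closure x.
Proof.
  intros Hi Hd Hdb Hx.
  assert (Hlad : ladder d x) by (exists i; auto).
  left. destruct Hdb as [[[n Hn]|[Hdb [Hlim Hunb]]]| ->].
  - exists (Datatypes.S n). right. exists d. auto.
  - destruct (unbounded_countable_union stage d kappa (Hcof i d Hi Hd) Hwk Hunb) as [n Hn].
    exists (Datatypes.S (Datatypes.S n)). right. exists d. split; [| exact Hlad].
    left. right. auto.
  - exists O. right. exact Hlad.
Qed.

End AtLimit.

Lemma club_system_at b : is_limit lt b ->
  exists E : T -> Prop, club_in lt E b /\
    (exists r, cof lt b r /\ card_le_sum E (seg r) (seg kappa)) /\
    (forall i d, lt i kappa -> S i d -> (E d \/ d = b) -> forall x, C i d x -> E x).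
Proof.
  intros Hb. destruct (cof_exists b) as [r Hr].
  pose proof Hr as [[f [Hf_below Hf_cofinal]] _].
  destruct (max_exists r kappa) as [nu [Hnu [Hrnu Hknu]]].
  exists (ladder_closure b r f). split; [| split].
  - exact (ladder_closure_club b r f Hb Hf_below Hf_cofinal).
  - exists r. split; [exact Hr |]. apply (card_le_sum_of_injects _ _ _ nu Hnu).
    apply ladder_closure_injects; try assumption.
    exact (le_trans _ _ _ (or_intror Hwk) Hknu).
  - intros i d Hi Hd Hdb x Hx. exact (ladder_closure_closed b r f i d x Hi Hd Hdb Hx).
Qed.

End LadderClosure.

End Ordinals.

Theorem claim3p2 (T : Type) (lt : T -> T -> Prop) (mu kappa : T)
  (S : T -> T -> Prop) (C : T -> T -> T -> Prop) :
  well_order lt ->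
  (* lambda = T = mu^+, mu a cardinal *)
  is_successor_of lt mu ->
  (* mu singular with cf(mu) = kappa, aleph_0 < kappa *)
  cof lt mu kappa -> lt kappa mu ->
  (exists w, is_omega lt w /\ lt w kappa) ->
  (* S_i (i < kappa) pairwise disjoint stationary subsets of S^lambda_kappa *)
  (forall i j d, lt i kappa -> lt j kappa -> i <> j -> S i d -> S j d -> False) ->
  (forall i, lt i kappa -> stationary lt (S i)) ->
  (forall i d, lt i kappa -> S i d -> cof lt d kappa) ->
  (* C^i is an S_i-club system with otp(C^i_delta) = kappa *)
  (forall i d, lt i kappa -> S i d -> club_in lt (C i d) d) ->
  (forall i d, lt i kappa -> S i d -> otp_eq lt (C i d) kappa) ->
  (* lambda \notin id_p(C^i, J^i) *)
  (forall i, lt i kappa ->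
     ~ in_id_p lt (S i) (C i) (fun d => J_b lt mu (C i d) d) (fun _ => True)) ->
  exists e : T -> T -> Prop,
    (forall b, is_limit lt b ->
       club_in lt (e b) b /\
       exists r, cof lt b r /\ card_le_sum (e b) (seg lt r) (seg lt kappa)) /\
    (forall i b d, lt i kappa -> is_limit lt b -> S i d ->
       (e b d \/ d = b) -> forall x, C i d x -> e b x).
Proof.
  intros Hwo _ _ _ [w [Hw Hwk]] Hdisj _ Hcof Hclub Hotp _.
  destruct (choice (fun b E => is_limit lt b -> club_in lt E b /\
      (exists r, cof lt b r /\ card_le_sum E (seg lt r) (seg lt kappa)) /\
      (forall i d, lt i kappa -> S i d -> (E d \/ d = b) -> forall x, C i d x -> E x)))
    as [e He].
  { intros b. destruct (classic (is_limit lt b)) as [Hb|Hb].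
    - destruct (club_system_at T lt w Hwo Hw kappa S C Hwk Hdisj Hcof Hclub Hotp b Hb) as [E HE].
      exists E. auto.
    - exists (fun _ => False). tauto. }
  exists e. split.
  - intros b Hb. destruct (He b Hb) as [Hclub_b [Hcard _]]. auto.
  - intros i b d Hi Hb. apply (He b Hb); assumption.
Qed.
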